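(* $f:X\to X$ is topologically exact: for every nonempty open subset $U\subset X$ there exists $n\ge0$ such that $f^nU\supset X\setminus\{x=0\}$.
   Context: Let $\mathbb{T}=\mathbb{R}/\mathbb{Z}$, $M=[0,1]\times\mathbb{T}$ with coordinates $(x,\theta)$. Fix $\gamma>0$. Let $u:[0,\tfrac34]\times\mathbb{T}\to(0,\infty)$ be $C^2$ with $u(0,\theta)=c_0>0$. Define $f(x,\theta)=(f_1(x,\theta),4\theta\bmod1)$, $f_1(x,\theta)=x(1+x^\gamma u(x,\theta))$ for $0\le x\le\tfrac34$, $f_1=4x-3$ for $\tfrac34<x\le1$. Standing assumptions: $x(1+x^\gamma u)\le1$ on $[0,\tfrac34]\times\mathbb{T}$; $|(Df)_{(x,\theta)}v|\ge|v|$ on $[0,\tfrac34]\times\mathbb{T}$; $f_1(\tfrac34,\theta)>\tfrac{15}{16}$; $\sup|x\,\partial u/\partial x|$, $\sup|\partial u/\partial\theta|$ sufficiently small. Let $X_i=\{(x,\theta)\in M:0\le x\le f_1(\tfrac34,\tfrac{i+\theta}{4})\}$ for $i=0,1,2,3$ and $X=\bigcup_iX_i$ (an $f$-invariant set with $f(X)=X$); open means relatively open in $X$. *)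

From Stdlib Require Import Reals.
From Coquelicot Require Import Coquelicot.
Open Scope R_scope.

(* Points of M = [0,1] x T are represented by pairs (x, th) of reals with
   0 <= x <= 1 and 0 <= th < 1 (canonical representative of th in R/Z). *)
Definition Mpt (p : R * R) : Prop := 0 <= fst p <= 1 /\ 0 <= snd p < 1.

Definition frac (t : R) : R := t - IZR (Int_part t).

(* x^gamma for x >= 0 (with 0^gamma = 0, gamma > 0); extended by 0 for x < 0 *)
Definition powg (x g : R) : R := if Rle_dec x 0 then 0 else Rpower x g.

Definition f1L (g : R) (u : R -> R -> R) (x th : R) : R :=
  x * (1 + powg x g * u x th).

Definition f1 (g : R) (u : R -> R -> R) (x th : R) : R :=
  if Rle_dec x (3/4) then f1L g u x th else 4 * x - 3.

Definition fmap (g : R) (u : R -> R -> R) (p : R * R) : R * R :=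
  (f1 g u (fst p) (snd p), frac (4 * snd p)).

Definition Xset (g : R) (u : R -> R -> R) (p : R * R) : Prop :=
  Mpt p /\ exists i : nat, (i <= 3)%nat /\
    fst p <= f1 g u (3/4) ((INR i + snd p) / 4).

Definition distT (a b : R) : R := Rmin (Rabs (a - b)) (1 - Rabs (a - b)).

Definition distM (p q : R * R) : R :=
  Rmax (Rabs (fst p - fst q)) (distT (snd p) (snd q)).

Definition openX (g : R) (u : R -> R -> R) (U : R * R -> Prop) : Prop :=
  (forall p, U p -> Xset g u p) /\
  (forall p, U p -> exists eps, 0 < eps /\
      forall q, Xset g u q -> distM p q < eps -> U q).

Definition dx (u : R -> R -> R) (x t : R) : R := Derive (fun y => u y t) x.
Definition dth (u : R -> R -> R) (x t : R) : R := Derive (fun s => u x s) t.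

Definition C2_strip (a b : R) (u : R -> R -> R) : Prop :=
  forall x t, a < x < b ->
    ex_derive (fun y => u y t) x /\ ex_derive (fun s => u x s) t /\
    ex_derive (fun y => dx u y t) x /\ ex_derive (fun s => dx u x s) t /\
    ex_derive (fun y => dth u y t) x /\ ex_derive (fun s => dth u x s) t /\
    continuous (fun p : R * R => u (fst p) (snd p)) (x, t) /\
    continuous (fun p : R * R => dx u (fst p) (snd p)) (x, t) /\
    continuous (fun p : R * R => dth u (fst p) (snd p)) (x, t) /\
    continuous (fun p : R * R => dx (dx u) (fst p) (snd p)) (x, t) /\
    continuous (fun p : R * R => dth (dx u) (fst p) (snd p)) (x, t) /\
    continuous (fun p : R * R => dx (dth u) (fst p) (snd p)) (x, t) /\
    continuous (fun p : R * R => dth (dth u) (fst p) (snd p)) (x, t).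

(* |(Df)_{(x,th)} v| >= |v| (Euclidean norm), for the left branch:
   Df = [[d_x f1L, d_th f1L],[0,4]] *)
Definition Df_expanding (g : R) (u : R -> R -> R) (x th : R) : Prop :=
  forall v1 v2 : R,
    let a := Derive (fun y => f1L g u y th) x in
    let b := Derive (fun s => f1L g u x s) th in
    v1 ^ 2 + v2 ^ 2 <= (a * v1 + b * v2) ^ 2 + (4 * v2) ^ 2.

From Stdlib Require Import Reals Lra Lia.
From Coquelicot Require Import Coquelicot.
Open Scope R_scope.

(* The angle obeys th |-> 4 th mod 1, so any arc of angles of length h is spread over the
   whole circle after n steps once 4^n h > 1. For the radial coordinate, along ANY sequence of
   angles the fibre maps x |-> f_1(x, th_k) expand distances on [0, 3/4] (the standing
   assumptions force d_x f_1 >= 1 there), push every x >= w up by some delta(w) > 0 uniform in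
   the angle, and act as x |-> 4x - 3 on (3/4, 1]. The image of an interval [a, b] therefore
   climbs until it crosses 3/4; a few steps later it has either doubled in length or covers an
   initial segment (0, t] with t >= w, and such a segment climbs to (0, 3/4] and stays there.
   All step counts depend only on a, b and delta, so a box [a, b] x [t0, t0 + h] inside U
   covers X \ {x = 0} after a fixed number of iterates, choosing the angle in [t0, t0 + h]
   that lands in the required fibre. *)

Lemma continuity_pt_near f x e : continuity_pt f x -> 0 < e ->
  exists r, 0 < r /\ forall y, Rabs (y - x) < r -> Rabs (f y - f x) < e.
Proof.
intros Hf He. destruct (Hf e He) as [r [Hr Hf']].
exists r; split; [exact Hr|]. intros y Hy.
destruct (Req_dec y x) as [->|Hne].
- rewrite Rminus_eq_0, Rabs_R0; exact He.
- apply (Hf' y); split; [split; [exact I | auto] | exact Hy].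
Qed.

Lemma continuity_pt_mul_bounded_at_0 (h : R -> R) r B : 0 < r ->
  (forall x, Rabs x < r -> Rabs (h x) <= B) -> continuity_pt (fun x => x * h x) 0.
Proof.
intros Hr Hh e He.
assert (HB : 0 <= B) by (eapply Rle_trans; [apply Rabs_pos | apply Hh; rewrite Rabs_R0; lra]).
exists (Rmin r (e / (B + 1))); split; [apply Rmin_pos; [lra | apply Rdiv_lt_0_compat; lra]|].
intros x [_ Hx]; simpl in *; unfold R_dist in *.
rewrite Rminus_0_r in Hx; rewrite Rmult_0_l, Rminus_0_r, Rabs_mult.
assert (Hxr : Rabs x < r) by (eapply Rlt_le_trans; [exact Hx | apply Rmin_l]).
assert (Hxe : Rabs x * (B + 1) < e).
{ apply Rmult_lt_reg_r with (/ (B + 1)); [apply Rinv_0_lt_compat; lra|].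
  rewrite Rmult_assoc, Rinv_r, Rmult_1_r by lra.
  eapply Rlt_le_trans; [exact Hx | apply Rmin_r]. }
pose proof (Hh x Hxr); pose proof (Rabs_pos x); nra.
Qed.

Lemma frac_range t : 0 <= frac t < 1.
Proof. unfold frac; destruct (base_Int_part t); lra. Qed.

Lemma frac_IZR_add z t : frac (IZR z + t) = frac t.
Proof.
destruct (Int_part_frac_part_spec (IZR z + t) (z + Int_part t) (frac t) (frac_range t)) as [_ E].
- unfold frac; rewrite plus_IZR; ring.
- exact (eq_sym E).
Qed.

Lemma frac_id t : 0 <= t < 1 -> frac t = t.
Proof.
intros Ht; destruct (Int_part_frac_part_spec t 0 t Ht) as [_ E]; [simpl; ring | exact (eq_sym E)].
Qed.

Lemma pow_eventually_large x c : 1 < x -> 0 < c ->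
  exists N, forall n, (N <= n)%nat -> 1 < x ^ n * c.
Proof.
intros Hx Hc.
destruct (Pow_x_infinity x ltac:(rewrite Rabs_pos_eq; lra) (2 / c)) as [N HN].
exists N; intros n Hn.
specialize (HN n Hn); rewrite Rabs_pos_eq in HN by (apply pow_le; lra).
apply Rge_le, Rmult_le_compat_r with (r := c) in HN; [|lra].
unfold Rdiv in HN; rewrite Rmult_assoc, Rinv_l in HN by lra; lra.
Qed.

Definition angle_step (t : R) : R := frac (4 * t).

Lemma angle_iter_range n t : 0 <= t < 1 -> 0 <= Nat.iter n angle_step t < 1.
Proof. intros Ht; destruct n; [exact Ht | apply frac_range]. Qed.

Lemma angle_iter n t : 0 <= t < 1 -> Nat.iter n angle_step t = frac (4 ^ n * t).
Proof.
intros Ht. induction n as [|n IH]; simpl.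
- rewrite Rmult_1_l, frac_id; trivial.
- rewrite IH. unfold angle_step, frac at 2.
  replace (4 * (4 ^ n * t - IZR (Int_part (4 ^ n * t))))
    with (IZR (- 4 * Int_part (4 ^ n * t)) + 4 * (4 ^ n * t))
    by (rewrite mult_IZR; simpl; ring).
  rewrite frac_IZR_add, Rmult_assoc; reflexivity.
Qed.

Lemma angle_step_branch (i : nat) t : 0 <= t < 1 -> angle_step ((INR i + t) / 4) = t.
Proof.
intros Ht. unfold angle_step.
replace (4 * ((INR i + t) / 4)) with (IZR (Z.of_nat i) + t) by (rewrite <- INR_IZR_INZ; field).
rewrite frac_IZR_add; apply frac_id; exact Ht.
Qed.

Lemma angle_iter_preimage n t0 h s : 0 <= t0 -> t0 + h < 1 -> 1 < 4 ^ n * h -> 0 <= s < 1 ->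
  exists t, t0 <= t <= t0 + h /\ Nat.iter n angle_step t = s.
Proof.
intros Ht0 Hh Hn Hs.
assert (HP : 0 < 4 ^ n) by (apply pow_lt; lra).
destruct (archimed (t0 * 4 ^ n - s)) as [Hj1 Hj2].
set (t := (IZR (up (t0 * 4 ^ n - s)) + s) / 4 ^ n).
assert (Et : 4 ^ n * t = IZR (up (t0 * 4 ^ n - s)) + s) by (unfold t; field; lra).
assert (Ht : t0 <= t <= t0 + h) by (split; nra).
exists t; split; [exact Ht|].
rewrite angle_iter, Et, frac_IZR_add by lra.
apply frac_id; exact Hs.
Qed.

Section Covering.

(* [L k] stands for the left branch x |-> f_1(x, th_k) along a fixed sequence of angles,
   so that [orbit] is the radial coordinate of an orbit of f. *)
Variable L : nat -> R -> R.

Definition branch (k : nat) (x : R) : R := if Rle_dec x (3/4) then L k x else 4 * x - 3.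

Fixpoint orbit (n : nat) (x : R) : R :=
  match n with O => x | S n => branch n (orbit n x) end.

Hypothesis L_cont : forall k x, 0 <= x <= 3/4 -> continuity_pt (L k) x.
Hypothesis L_zero : forall k, L k 0 = 0.
Hypothesis L_expand : forall k p q, 0 <= p <= q -> q <= 3/4 -> q - p <= L k q - L k p.
Hypothesis L_le1 : forall k x, 0 <= x <= 3/4 -> L k x <= 1.
Hypothesis L_top : forall k, 15/16 < L k (3/4).

Lemma L_ivt k p q y : 0 <= p <= q -> q <= 3/4 -> L k p <= y <= L k q ->
  exists z, p <= z <= q /\ L k z = y.
Proof.
intros Hpq Hq Hy. destruct (Req_dec p q) as [<-|Hne].
- exists p; split; lra.
- destruct (Ranalysis5.f_interv_is_interv (L k) p q y) as [z Hz]; try lra.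
  + intros x Hx; apply L_cont; lra.
  + exists z; exact Hz.
Qed.

Variables a b : R.

Definition reached (k : nat) (y : R) : Prop := exists x, a <= x <= b /\ orbit k x = y.
Definition covers (k : nat) (p q : R) : Prop := forall y, p <= y <= q -> reached k y.
Definition covers0 (k : nat) (t : R) : Prop := forall y, 0 < y <= t -> reached k y.

Lemma reached_left k y : reached k y -> y <= 3/4 -> reached (S k) (L k y).
Proof.
intros [x [Hx E]] Hy; exists x; split; [exact Hx|].
simpl; rewrite E; unfold branch; destruct (Rle_dec y (3/4)); [reflexivity|lra].
Qed.

Lemma reached_right k y : reached k ((y + 3) / 4) -> 3/4 < (y + 3) / 4 -> reached (S k) y.
Proof.
intros [x [Hx E]] Hy; exists x; split; [exact Hx|].
simpl; rewrite E; unfold branch; destruct (Rle_dec ((y + 3) / 4) (3/4)); [lra|field].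
Qed.

Lemma covers_left k p q : covers k p q -> 0 <= p <= q -> q <= 3/4 ->
  covers (S k) (L k p) (L k q).
Proof.
intros Hc Hpq Hq y Hy. destruct (L_ivt k p q y Hpq Hq Hy) as [z [Hz <-]].
apply reached_left; [apply Hc|]; lra.
Qed.

Lemma covers_right k p q : covers k p q -> 3/4 < p -> covers (S k) (4 * p - 3) (4 * q - 3).
Proof. intros Hc Hp y Hy; apply reached_right; [apply Hc|]; lra. Qed.

Lemma covers0_right k p q : covers k p q -> p <= 3/4 -> covers0 (S k) (4 * q - 3).
Proof. intros Hc Hp y Hy; apply reached_right; [apply Hc|]; lra. Qed.

Lemma covers0_left k t : covers0 k t -> 0 <= t <= 3/4 -> covers0 (S k) (L k t).
Proof.
intros Hc Ht y Hy.
destruct (L_ivt k 0 t y) as [z [Hz <-]]; [lra | lra | rewrite L_zero; lra |].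
destruct (Req_dec z 0) as [->|Hz0]; [rewrite L_zero in Hy; lra|].
apply reached_left; [apply Hc|]; lra.
Qed.

Lemma covers0_stable k n : covers0 k (3/4) -> covers0 (k + n) (3/4).
Proof.
intros Hc. induction n as [|n IH]; [rewrite Nat.add_0_r; exact Hc|].
rewrite Nat.add_succ_r. intros y Hy.
apply (covers0_left (k + n) (3/4) IH); [lra|].
pose proof (L_top (k + n)); lra.
Qed.

Variables w delta : R.
Hypothesis w_range : 0 < w <= 3/8.
Hypothesis L_gap : forall k x, w <= x <= 3/4 -> x + delta <= L k x.

Lemma covers_climb n : forall k p q, 0 < p -> q <= 1 -> w <= q - p ->
  3/4 < q + INR n * delta -> covers k p q ->
  exists i p' q', (i <= n)%nat /\ covers (k + i) p' q' /\ 0 < p' /\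
    q - p <= q' - p' /\ 3/4 < q' <= 1.
Proof.
induction n as [|n IH]; intros k p q Hp Hq Hw Hn Hc.
- exists 0%nat, p, q; rewrite Nat.add_0_r; simpl in Hn.
  repeat split; trivial; lra.
- destruct (Rlt_or_le (3/4) q) as [Hq'|Hq'].
  { exists 0%nat, p, q; rewrite Nat.add_0_r; repeat split; trivial; lia || lra. }
  pose proof (L_expand k p q ltac:(lra) Hq').
  pose proof (L_expand k 0 p ltac:(lra) ltac:(lra)) as Hp0; rewrite L_zero in Hp0.
  pose proof (L_gap k q ltac:(lra)).
  pose proof (L_le1 k q ltac:(lra)).
  rewrite S_INR in Hn.
  destruct (IH (S k) (L k p) (L k q)) as [i [p' [q' [Hi [Hc' H']]]]]; try lra.
  { apply covers_left; trivial; lra. }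
  exists (S i), p', q'; rewrite Nat.add_succ_r, <- Nat.add_succ_l.
  repeat split; try lia; tauto || lra.
Qed.

Lemma covers0_climb n : forall k t, w <= t -> 3/4 < t + INR n * delta -> covers0 k t ->
  exists i, (i <= n)%nat /\ covers0 (k + i) (3/4).
Proof.
induction n as [|n IH]; intros k t Ht Hn Hc.
- exists 0%nat; rewrite Nat.add_0_r; simpl in Hn.
  split; [lia|]; intros y Hy; apply Hc; lra.
- destruct (Rle_or_lt (3/4) t) as [Ht'|Ht'].
  { exists 0%nat; rewrite Nat.add_0_r; split; [lia|]; intros y Hy; apply Hc; lra. }
  pose proof (L_gap k t ltac:(lra)).
  pose proof (L_expand k 0 t ltac:(lra) ltac:(lra)) as Ht0; rewrite L_zero in Ht0.
  rewrite S_INR in Hn.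
  destruct (IH (S k) (L k t)) as [i [Hi Hc']]; try lra.
  { apply covers0_left; trivial; lra. }
  exists (S i); rewrite Nat.add_succ_r, <- Nat.add_succ_l; split; [lia | exact Hc'].
Qed.

(* An interval reaching beyond the discontinuity at 3/4 either covers some (0, t] with
   t >= w within two steps, or one of its two sides has at least half its length and its
   image lies in (3/4, 1], where 4x - 3 stretches it to at least double the length. *)
Lemma covers_cross k p q : 0 < p -> 3/4 < q <= 1 -> w <= q - p -> covers k p q ->
  (exists i t, (i <= 2)%nat /\ w <= t /\ covers0 (k + i) t) \/
  (exists i p' q', (i <= 2)%nat /\ covers (k + i) p' q' /\ 0 < p' /\ q' <= 1 /\
     2 * (q - p) <= q' - p').
Proof.
intros Hp Hq Hw Hc.
destruct (Rlt_or_le (3/4) p) as [Hp'|Hp'].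
{ right; exists 1%nat, (4 * p - 3), (4 * q - 3); rewrite Nat.add_1_r.
  repeat split; try lia; try lra; apply covers_right; trivial. }
destruct (Rle_or_lt (3/4 + (q - p) / 2) q) as [Hh|Hh].
{ left; exists 1%nat, (4 * q - 3); rewrite Nat.add_1_r.
  repeat split; try lia; try lra; apply (covers0_right k p q); trivial. }
assert (Hc1 : covers (S k) (L k p) (L k (3/4))).
{ apply covers_left; [intros y Hy; apply Hc|..]; lra. }
pose proof (L_expand k p (3/4) ltac:(lra) ltac:(lra)).
pose proof (L_top k).
pose proof (L_le1 k (3/4) ltac:(lra)).
destruct (Rle_or_lt (L k p) (3/4)) as [HL|HL].
- left; exists 2%nat, (4 * L k (3/4) - 3); replace (k + 2)%nat with (S (S k)) by lia.
  repeat split; try lia; try lra; apply (covers0_right (S k) (L k p)); trivial.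
- right; exists 2%nat, (4 * L k p - 3), (4 * L k (3/4) - 3).
  replace (k + 2)%nat with (S (S k)) by lia.
  repeat split; try lia; try lra; apply covers_right; trivial.
Qed.

Variable A : nat.
Hypothesis A_large : 1 < INR A * delta.

Lemma covers_double j : forall k p q, 0 < p -> q <= 1 -> w <= q - p ->
  1 < 2 ^ j * (q - p) -> covers k p q ->
  exists k' t, (k' <= k + j * (A + 3))%nat /\ w <= t /\ covers0 k' t.
Proof.
induction j as [|j IH]; intros k p q Hp Hq Hw Hj Hc; simpl in Hj; [lra|].
destruct (covers_climb A k p q) as [i [p' [q' [Hi [Hc' [Hp' [Hlen Hq']]]]]]]; trivial; try lra.
destruct (covers_cross (k + i) p' q') as [[m [t [Hm [Ht Hc'']]]] | [m [p'' [q'' [Hm [Hc'' H'']]]]]];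
  trivial; try lra.
- exists (k + i + m)%nat, t; split; [simpl; lia | tauto].
- assert (0 < 2 ^ j) by (apply pow_lt; lra).
  destruct (IH (k + i + m)%nat p'' q'') as [k' [t [Hk' Hck]]]; trivial; try nra.
  exists k', t; split; [simpl; nia | exact Hck].
Qed.

Variable D : nat.
Hypothesis D_large : 1 < 2 ^ D * w.
Hypothesis a_pos : 0 < a.
Hypothesis ab_wide : w <= b - a.
Hypothesis b_le1 : b <= 1.

Lemma orbit_covers n : (D * (A + 3) + A <= n)%nat -> covers0 (S n) (L n (3/4)).
Proof.
intros Hn.
assert (Hc0 : covers 0 a b) by (intros y Hy; exists y; split; trivial).
assert (0 < 2 ^ D) by (apply pow_lt; lra).
destruct (covers_double D 0 a b) as [k [t [Hk [Ht Hc]]]]; trivial; try nra.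
destruct (covers0_climb A k t Ht) as [i [Hi Hc']]; trivial; try lra.
apply covers0_left; [|lra].
replace n with (k + i + (n - (k + i)))%nat by lia.
apply covers0_stable; exact Hc'.
Qed.

End Covering.

Lemma f1_left g u x t : x <= 3/4 -> f1 g u x t = f1L g u x t.
Proof. intros Hx; unfold f1; destruct (Rle_dec x (3/4)); [reflexivity | lra]. Qed.

Lemma fmap_iter_snd g u n p : snd (Nat.iter n (fmap g u) p) = Nat.iter n angle_step (snd p).
Proof. induction n as [|n IH]; simpl; [reflexivity | rewrite <- IH; reflexivity]. Qed.

Lemma fmap_iter_fst g u n x t :
  fst (Nat.iter n (fmap g u) (x, t)) = orbit (fun k y => f1L g u y (Nat.iter k angle_step t)) n x.
Proof.
induction n as [|n IH]; [reflexivity|].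
simpl; rewrite IH, fmap_iter_snd; reflexivity.
Qed.

Lemma powg_Rpower x g : 0 < x -> powg x g = Rpower x g.
Proof. intros Hx; unfold powg; destruct (Rle_dec x 0); [lra | reflexivity]. Qed.

Lemma powg_bounds x g : 0 <= g -> x <= 1 -> 0 <= powg x g <= 1.
Proof.
intros Hg Hx; unfold powg; destruct (Rle_dec x 0); [lra|].
split; [left; apply exp_pos|].
apply Rle_trans with (Rpower 1 g); [apply Rle_Rpower_l; lra|].
unfold Rpower; rewrite ln_1, Rmult_0_r, exp_0; lra.
Qed.

Section LeftBranch.

Variables (g : R) (u : R -> R -> R) (d : R).
Hypothesis g_pos : 0 < g.
Hypothesis d_pos : 0 < d.
Hypothesis u_C2 : C2_strip (- d) (3/4 + d) u.
Hypothesis u_pos : forall x t, 0 <= x <= 3/4 -> 0 < u x t.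
Hypothesis Df_exp : forall x t, 0 <= x <= 3/4 -> Df_expanding g u x t.
Hypothesis x_dx_u_small : forall x t, 0 <= x <= 3/4 -> Rabs (x * dx u x t) <= 1/2.

Lemma u_ex_derive_x x t : 0 <= x <= 3/4 -> ex_derive (fun y => u y t) x.
Proof. intros Hx; apply (u_C2 x t); lra. Qed.

Lemma u_ex_derive_t x t : 0 <= x <= 3/4 -> ex_derive (fun s => u x s) t.
Proof. intros Hx; apply (u_C2 x t); lra. Qed.

Lemma f1L_is_derive x t : 0 < x <= 3/4 ->
  is_derive (fun y => f1L g u y t) x
    (1 + (1 + g) * Rpower x g * u x t + Rpower x g * (x * dx u x t)).
Proof.
intros Hx.
apply is_derive_ext_loc with (fun y => y * (1 + exp (g * ln y) * u y t)).
- apply locally_interval with 0 p_infty; [exact (proj1 Hx) | exact I|].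
  intros y Hy _; unfold f1L; rewrite powg_Rpower by exact Hy; reflexivity.
- auto_derive.
  + repeat split; [lra | apply u_ex_derive_x; lra].
  + unfold Rpower, dx; field; lra.
Qed.

(* The expansion hypothesis applied to (1, 0) gives |d_x f1L| >= 1, and the smallness of
   x d_x u excludes d_x f1L <= -1. *)
Lemma f1L_derive_ge1 x t : 0 < x <= 3/4 ->
  1 <= 1 + (1 + g) * Rpower x g * u x t + Rpower x g * (x * dx u x t).
Proof.
intros Hx.
assert (HD := Df_exp x t ltac:(lra) 1 0); cbv zeta in HD.
assert (E : Derive (fun y => f1L g u y t) x
  = 1 + (1 + g) * Rpower x g * u x t + Rpower x g * (x * dx u x t))
  by (apply is_derive_unique, f1L_is_derive, Hx).
rewrite E in HD.
set (D := 1 + (1 + g) * Rpower x g * u x t + Rpower x g * (x * dx u x t)) in *.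
assert (Hsq : 1 <= D * D) by (simpl in HD; nra).
assert (Hp : 0 < Rpower x g <= 1)
  by (split; [apply exp_pos | rewrite <- powg_Rpower by lra; apply powg_bounds; lra]).
assert (Hu := u_pos x t ltac:(lra)).
assert (Hs := x_dx_u_small x t ltac:(lra)); apply Rabs_le_between in Hs.
assert (0 < (1 + g) * Rpower x g * u x t)
  by (apply Rmult_lt_0_compat; [apply Rmult_lt_0_compat|]; lra).
assert (-1/2 <= Rpower x g * (x * dx u x t)) by nra.
assert (-1 < D) by (unfold D; lra).
nra.
Qed.

Lemma f1L_continuous x t : 0 <= x <= 3/4 -> continuity_pt (fun y => f1L g u y t) x.
Proof.
intros Hx. destruct (Req_dec x 0) as [->|Hx0].
- assert (Hu : continuity_pt (fun y => u y t) 0)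
    by (apply continuity_pt_filterlim, (ex_derive_continuous (fun y => u y t)), u_ex_derive_x; lra).
  destruct (continuity_pt_near _ _ 1 Hu ltac:(lra)) as [r [Hr Hur]].
  apply (continuity_pt_mul_bounded_at_0 _ (Rmin r 1) (2 + Rabs (u 0 t))); [apply Rmin_pos; lra|].
  intros y Hy.
  assert (Hy1 : Rabs (y - 0) < r) by (rewrite Rminus_0_r; eapply Rlt_le_trans; [exact Hy | apply Rmin_l]).
  assert (Hy2 : y <= 1) by (apply Rabs_lt_between in Hy; pose proof (Rmin_r r 1); lra).
  specialize (Hur y Hy1).
  pose proof (powg_bounds y g ltac:(lra) Hy2).
  pose proof (Rabs_triang_inv (u y t) (u 0 t)).
  eapply Rle_trans; [apply Rabs_triang|].
  rewrite Rabs_R1, Rabs_mult, (Rabs_pos_eq (powg y g)) by lra.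
  pose proof (Rabs_pos (u y t)); nra.
- apply continuity_pt_filterlim, (ex_derive_continuous (fun y => f1L g u y t)).
  eexists; apply f1L_is_derive; lra.
Qed.

Lemma f1L_top_continuous (i : nat) t :
  continuity_pt (fun s => f1L g u (3/4) ((INR i + s) / 4)) t.
Proof.
apply continuity_pt_filterlim, (ex_derive_continuous (fun s => f1L g u (3/4) ((INR i + s) / 4))).
unfold f1L; auto_derive; apply u_ex_derive_t; lra.
Qed.

Lemma f1L_expand p q t : 0 <= p <= q -> q <= 3/4 -> q - p <= f1L g u q t - f1L g u p t.
Proof.
intros Hpq Hq. destruct (Req_dec p 0) as [->|Hp0].
- unfold f1L.
  pose proof (powg_bounds q g ltac:(lra) ltac:(lra)).
  pose proof (u_pos q t ltac:(lra)).
  assert (0 <= q * (powg q g * u q t)) by (apply Rmult_le_pos; [|apply Rmult_le_pos]; lra).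
  lra.
- destruct (MVT_gen (fun y => f1L g u y t) p q
    (fun y => 1 + (1 + g) * Rpower y g * u y t + Rpower y g * (y * dx u y t))) as [c [Hc E]];
    rewrite ?Rmin_left, ?Rmax_right in * by lra.
  + intros y Hy; apply f1L_is_derive; lra.
  + intros y Hy; apply f1L_continuous; lra.
  + rewrite E; pose proof (f1L_derive_ge1 c t ltac:(lra)); nra.
Qed.

Lemma f1L_gap s : 0 < s <= 3/4 -> exists delta, 0 < delta /\
  forall t x, 0 <= t <= 1 -> s <= x <= 3/4 -> x + delta <= f1L g u x t.
Proof.
intros Hs.
destruct (continuity_ab_min (fun t => u s t) 0 1) as [tm [Htm _]]; [lra| |].
{ intros t _; apply continuity_pt_filterlim, (ex_derive_continuous (fun t => u s t)).
  apply u_ex_derive_t; lra. }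
assert (Hp : 0 < s * powg s g)
  by (rewrite powg_Rpower by lra; apply Rmult_lt_0_compat; [lra | apply exp_pos]).
exists (s * powg s g * u s tm); split; [apply Rmult_lt_0_compat; [exact Hp | apply u_pos; lra]|].
intros t x Ht Hx.
pose proof (f1L_expand s x t ltac:(lra) ltac:(lra)) as Hexp.
assert (s * powg s g * u s tm <= s * powg s g * u s t)
  by (apply Rmult_le_compat_l; [lra | apply Htm; lra]).
unfold f1L at 2 in Hexp; lra.
Qed.

Hypothesis f1L_le1 : forall x t, 0 <= x <= 3/4 -> f1L g u x t <= 1.
Hypothesis f1_top : forall t, f1 g u (3/4) t > 15/16.

Lemma fibre_covering a b : 0 < a -> a < b -> b <= 1 ->
  exists N, forall n t, (N <= n)%nat -> 0 <= t < 1 ->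
  forall y, 0 < y <= f1L g u (3/4) (Nat.iter n angle_step t) ->
  exists x, a <= x <= b /\ fst (Nat.iter (S n) (fmap g u) (x, t)) = y.
Proof.
intros Ha Hab Hb.
set (w := Rmin (b - a) (3/8)).
assert (Hw : 0 < w <= 3/8) by (unfold w; split; [apply Rmin_pos | apply Rmin_r]; lra).
destruct (f1L_gap w ltac:(lra)) as [delta [Hdelta Hgap]].
destruct (INR_archimed delta 1 Hdelta) as [A HA].
destruct (pow_eventually_large 2 w ltac:(lra) ltac:(lra)) as [D HD].
assert (Hwab : w <= b - a) by apply Rmin_l.
exists (D * (A + 3) + A)%nat; intros n t Hn Ht y Hy.
set (L := fun k y => f1L g u y (Nat.iter k angle_step t)).
assert (Hcov : covers0 L a b (S n) (L n (3/4))).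
{ apply (orbit_covers L) with (w := w) (delta := delta) (A := A) (D := D); auto.
  - intros k x Hx; apply f1L_continuous; exact Hx.
  - intros k; unfold L, f1L; ring.
  - intros k p q Hpq Hq; apply f1L_expand; trivial.
  - intros k x Hx; apply f1L_le1; exact Hx.
  - intros k; unfold L; rewrite <- f1_left by lra; apply f1_top.
  - intros k x Hx; apply Hgap; trivial; pose proof (angle_iter_range k t Ht); lra. }
destruct (Hcov y Hy) as [x [Hx E]].
exists x; split; [exact Hx | rewrite fmap_iter_fst; exact E].
Qed.

Lemma openX_box U p0 : openX g u U -> U p0 ->
  exists a b t0 h, 0 < a /\ a < b /\ b <= 1 /\ 0 <= t0 /\ 0 < h /\ t0 + h < 1 /\
    forall x t, a <= x <= b -> t0 <= t <= t0 + h -> U (x, t).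
Proof.
intros [HUX HUo] Hp0.
destruct (HUo p0 Hp0) as [r [Hr Hball]].
destruct (HUX p0 Hp0) as [[Hx0 Ht0] [i0 [Hi0 Hxi]]].
destruct p0 as [x0 t0]; simpl in Hx0, Ht0, Hxi.
rewrite f1_left in Hxi by lra.
set (rho := Rmin r (1/4)).
assert (Hrho : 0 < rho <= r /\ rho <= 1/4)
  by (unfold rho; repeat split; [apply Rmin_pos | apply Rmin_l | apply Rmin_r]; lra).
destruct Hrho as [[Hrho0 Hrhor] Hrho1].
destruct (continuity_pt_near _ t0 (rho / 4) (f1L_top_continuous i0 t0)) as [al [Hal Hnear]]; [lra|].
set (h := Rmin (Rmin r (1 - t0)) al / 2).
assert (Hh : 0 < h /\ h < r /\ t0 + h < 1 /\ h < al).
{ assert (0 < Rmin (Rmin r (1 - t0)) al) by (repeat apply Rmin_pos; lra).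
  pose proof (Rmin_l (Rmin r (1 - t0)) al); pose proof (Rmin_r (Rmin r (1 - t0)) al).
  pose proof (Rmin_l r (1 - t0)); pose proof (Rmin_r r (1 - t0)).
  unfold h; lra. }
destruct Hh as [Hh0 [Hhr [Hh1 Hhal]]].
(* Points below 5/8 lie in X_0; points below x0 - rho/4 lie in X_i0 by continuity of its boundary. *)
assert (Hmem : forall x t, 0 <= x <= 1 -> Rabs (x - x0) < r -> t0 <= t <= t0 + h ->
  x <= 5/8 \/ x <= x0 - rho/4 -> U (x, t)).
{ intros x t Hx Hxr Ht Hcase; apply (Hball (x, t)).
  - split; [unfold Mpt; simpl; lra|]; destruct Hcase as [Hc|Hc].
    + exists 0%nat; split; [lia|]; cbn [fst snd].
      specialize (f1_top ((INR 0 + t) / 4)); lra.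
    + exists i0; split; [exact Hi0|]; cbn [fst snd]; rewrite f1_left by lra.
      specialize (Hnear t ltac:(apply Rabs_def1; lra)); apply Rabs_def2 in Hnear; lra.
  - unfold distM, distT; simpl; apply Rmax_lub_lt; [rewrite Rabs_minus_sym; exact Hxr|].
    eapply Rle_lt_trans; [apply Rmin_l | apply Rabs_def1; lra]. }
destruct (Rle_or_lt x0 (1/2)) as [Hc|Hc].
- exists (x0 + rho/4), (x0 + rho/2), t0, h; repeat split; try lra.
  intros x t Hx Ht; apply Hmem; [lra | apply Rabs_def1; lra | exact Ht | left; lra].
- exists (x0 - rho/2), (x0 - rho/4), t0, h; repeat split; try lra.
  intros x t Hx Ht; apply Hmem; [lra | apply Rabs_def1; lra | exact Ht | right; lra].
Qed.

End LeftBranch.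

Theorem proposition2p2 :
  forall g : R, 0 < g ->
  exists eps : R, 0 < eps /\
  forall (c0 : R) (u : R -> R -> R),
    0 < c0 ->
    (* u is C^2 on [0,3/4] x T (as the restriction of a C^2 function on a
       neighbourhood strip), 1-periodic in th, positive, u(0,th) = c0 *)
    (exists d, 0 < d /\ C2_strip (- d) (3/4 + d) u) ->
    (forall x t, u x (t + 1) = u x t) ->
    (forall x t, 0 <= x <= 3/4 -> 0 < u x t) ->
    (forall t, u 0 t = c0) ->
    (* standing assumptions *)
    (forall x t, 0 <= x <= 3/4 -> f1L g u x t <= 1) ->
    (forall x t, 0 <= x <= 3/4 -> Df_expanding g u x t) ->
    (forall t, f1 g u (3/4) t > 15/16) ->
    (forall x t, 0 <= x <= 3/4 -> Rabs (x * dx u x t) <= eps) ->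
    (forall x t, 0 <= x <= 3/4 -> Rabs (dth u x t) <= eps) ->
    (* topological exactness of f : X -> X *)
    forall U : R * R -> Prop,
      openX g u U -> (exists p, U p) ->
      exists n : nat,
        forall q, Xset g u q -> fst q <> 0 ->
          exists p, U p /\ Nat.iter n (fmap g u) p = q.
Proof.
(* eps = 1/2 is what makes d_x f_1 >= 1. *)
intros g Hg; exists (1/2); split; [lra|].
intros c0 u _ [d [Hd HC2]] _ Hpos _ Hle1 HDf Hm Hdx _ U HU [p0 Hp0].
destruct (openX_box g u d Hd HC2 Hm U p0 HU Hp0)
  as [a [b [t0 [h [Ha [Hab [Hb [Ht0 [Hh [Hth Hbox]]]]]]]]]].
destruct (fibre_covering g u d Hg Hd HC2 Hpos HDf Hdx Hle1 Hm a b Ha Hab Hb) as [N HN].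
destruct (pow_eventually_large 4 h ltac:(lra) Hh) as [M HM].
exists (S (N + M)); intros [xq tq] [[Hxq Htq] [i [Hi Hxi]]] Hxq0; cbn [fst snd] in *.
rewrite f1_left in Hxi by lra.
assert (Hs : 0 <= (INR i + tq) / 4 < 1)
  by (pose proof (pos_INR i); pose proof (le_INR i 3 Hi); simpl in *; lra).
destruct (angle_iter_preimage (N + M) t0 h ((INR i + tq) / 4)) as [t [Ht Hiter]];
  [trivial | trivial | apply HM; lia | trivial |].
destruct (HN (N + M)%nat t ltac:(lia) ltac:(lra) xq) as [x [Hx Hfst]].
{ rewrite Hiter; lra. }
exists (x, t); split; [apply Hbox; lra|].
apply injective_projections; [exact Hfst|].
rewrite fmap_iter_snd, Nat.iter_succ; cbn [snd]; rewrite Hiter; apply angle_step_branch; exact Htq.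
Qed.
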